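(* Let $V$ be a Majorana algebra with a generating set $A$ of Majorana axes. Suppose $a_0, a_1 \in A$ satisfy $\tau(a_0) = 1$ and the subalgebra $U = \langle\langle a_0, a_1\rangle\rangle$ generated by $a_0$ and $a_1$ is of type $2A$, with third basis vector $a_\rho$. Then $a_\rho$ satisfies axioms M3–M7.
   Context: Let $V$ be a real vector space with a positive definite symmetric bilinear form $(\,,\,)$ and a bilinear commutative (non-associative) product $\cdot$ such that (M1) $(u, v\cdot w) = (u\cdot v, w)$ for all $u,v,w\in V$, and (M2) $(u\cdot u, v\cdot v)\ge (u\cdot v, u\cdot v)$ for all $u,v \in V$. For $a \in V$ and $\mu \in \mathbb{R}$ write $V_\mu^{(a)} = \{v \in V : a\cdot v = \mu v\}$. A nonzero $a\in V$ is said to satisfy axioms M3–M7 if: (M3) $(a,a)=1$ and $a\cdot a = a$; (M4) $V = V_1^{(a)}\oplus V_0^{(a)}\oplus V_{1/4}^{(a)} \oplus V_{1/32}^{(a)}$; (M5) $V_1^{(a)} = \mathbb{R}a$; (M6) the linear map $\tau(a)$ of $V$ acting as $+1$ on $V_1^{(a)}\oplus V_0^{(a)}\oplus V_{1/4}^{(a)}$ and as $-1$ on $V_{1/32}^{(a)}$ preserves the algebra product; (M7) on $V_+^{(a)} := V_1^{(a)}\oplus V_0^{(a)}\oplus V_{1/4}^{(a)}$, the linear map $\sigma(a)$ acting as $+1$ on $V_1^{(a)}\oplus V_0^{(a)}$ and as $-1$ on $V_{1/4}^{(a)}$ preserves the restriction of the algebra product to $V_+^{(a)}$. Elements satisfying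 M3–M7 are called Majorana axes. A Majorana algebra is such a $V$ (satisfying M1, M2) generated as an algebra by a set $A$ of Majorana axes. The subalgebra $\langle\langle a_0,a_1\rangle\rangle$ generated by two Majorana axes is of type $2A$ if it is $3$-dimensional with basis $a_0, a_1, a_\rho$ (the ''third basis vector'') where $a_\rho\cdot a_\rho = a_\rho$, $a_0\cdot a_1 = \frac{1}{8}(a_0+a_1-a_\rho)$, $a_0\cdot a_\rho = \frac18(a_0+a_\rho-a_1)$, $a_1\cdot a_\rho = \frac18(a_1+a_\rho-a_0)$, and $(a_0,a_1)=(a_0,a_\rho)=(a_1,a_\rho)=\frac18$. *)

From HB Require Import structures.
From mathcomp Require Import all_boot all_order all_algebra.
From mathcomp Require Import reals.
Set Implicit Arguments. Unset Strict Implicit. Unset Printing Implicit Defensive.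
Import Order.TTheory GRing.Theory Num.Theory.
Local Open Scope ring_scope.

Section Majorana.
Variables (R : realType) (V : lmodType R)
          (form : V -> V -> R) (mul : V -> V -> V).

Definition form_axioms : Prop :=
  [/\ (forall (c : R) (u v w : V), form (c *: u + v) w = c * form u w + form v w),
      (forall u v, form u v = form v u)
    & (forall v, v != 0 -> 0 < form v v)].

Definition product_axioms : Prop :=
  (forall (c : R) (u v w : V), mul (c *: u + v) w = c *: mul u w + mul v w) /\
  (forall u v, mul u v = mul v u).

Definition M1 : Prop := forall u v w, form u (mul v w) = form (mul u v) w.
Definition M2 : Prop := forall u v, form (mul u v) (mul u v) <= form (mul u u) (mul v v).

Definition eigsp (a : V) (mu : R) (v : V) : Prop := mul a v = mu *: v.

Definition lin_map (t : V -> V) : Prop :=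
  forall (c : R) (u v : V), t (c *: u + v) = c *: t u + t v.

Definition M3 (a : V) : Prop := form a a = 1 /\ mul a a = a.

Definition M4 (a : V) : Prop :=
  (forall v, exists v1 v0 v4 v32,
      [/\ eigsp a 1 v1, eigsp a 0 v0, eigsp a (1/4) v4, eigsp a (1/32) v32
        & v = v1 + v0 + v4 + v32]) /\
  (forall v1 v0 v4 v32,
      eigsp a 1 v1 -> eigsp a 0 v0 -> eigsp a (1/4) v4 -> eigsp a (1/32) v32 ->
      v1 + v0 + v4 + v32 = 0 -> [/\ v1 = 0, v0 = 0, v4 = 0 & v32 = 0]).

Definition M5 (a : V) : Prop := forall v, eigsp a 1 v <-> exists c : R, v = c *: a.

Definition is_tau (a : V) (t : V -> V) : Prop :=
  [/\ lin_map t,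
      (forall v, eigsp a 1 v \/ eigsp a 0 v \/ eigsp a (1/4) v -> t v = v)
    & (forall v, eigsp a (1/32) v -> t v = - v)].

Definition M6 (a : V) : Prop :=
  forall t, is_tau a t -> forall u v, t (mul u v) = mul (t u) (t v).

Definition Vplus (a : V) (v : V) : Prop :=
  exists v1 v0 v4, [/\ eigsp a 1 v1, eigsp a 0 v0, eigsp a (1/4) v4 & v = v1 + v0 + v4].

(* s is (a linear map extending) sigma(a) on V_+^(a) *)
Definition is_sigma (a : V) (s : V -> V) : Prop :=
  [/\ lin_map s,
      (forall v, eigsp a 1 v \/ eigsp a 0 v -> s v = v)
    & (forall v, eigsp a (1/4) v -> s v = - v)].

Definition M7 (a : V) : Prop :=
  forall s, is_sigma a s ->
    forall u v, Vplus a u -> Vplus a v -> s (mul u v) = mul (s u) (s v).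

Definition majorana_axis (a : V) : Prop := [/\ M3 a, M4 a, M5 a, M6 a & M7 a].

Definition subalg (S : V -> Prop) : Prop :=
  [/\ S 0,
      (forall (c : R) u v, S u -> S v -> S (c *: u + v))
    & (forall u v, S u -> S v -> S (mul u v))].

Definition gen (A : V -> Prop) (v : V) : Prop :=
  forall S, subalg S -> (forall x, A x -> S x) -> S v.

Definition majorana_algebra (A : V -> Prop) : Prop :=
  [/\ form_axioms, product_axioms, M1 /\ M2,
      (forall a, A a -> majorana_axis a)
    & (forall v, gen A v)].

Definition type2A (a0 a1 arho : V) : Prop :=
  [/\ (forall v, gen (fun x => x = a0 \/ x = a1) v <->
                 exists c0 c1 c2 : R, v = c0 *: a0 + c1 *: a1 + c2 *: arho),
      (forall c0 c1 c2 : R, c0 *: a0 + c1 *: a1 + c2 *: arho = 0 ->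
                 [/\ c0 = 0, c1 = 0 & c2 = 0]),
      [/\ mul arho arho = arho,
          mul a0 a1 = (1/8) *: (a0 + a1 - arho),
          mul a0 arho = (1/8) *: (a0 + arho - a1)
        & mul a1 arho = (1/8) *: (a1 + arho - a0)]
    & [/\ form a0 a1 = 1/8, form a0 arho = 1/8 & form a1 arho = 1/8]].

End Majorana.

From HB Require Import structures.
From mathcomp Require Import all_boot all_order all_algebra.
From mathcomp Require Import reals ring lra.
From Stdlib Require Import IndefiniteDescription.
Set Implicit Arguments. Unset Strict Implicit. Unset Printing Implicit Defensive.
Import Order.TTheory GRing.Theory Num.Theory.
Local Open Scope ring_scope.

(* Since tau(a0) = 1, the eigenspace V_{1/32} of a0 is zero, so
   V = V_1 (+) V_0 (+) V_{1/4} and sigma(a0) is defined on all of V: it is a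
   linear involution, an algebra automorphism by M7, and an isometry because
   the eigenspaces of a0 are orthogonal by M1.  In the 2A algebra,
   a1 = a0/8 + (-a0/8 + (a1 + arho)/2) + (a1 - arho)/2 splits into
   a0-eigenvectors for 1, 0 and 1/4, so sigma(a0) maps a1 to arho.  The axioms
   M3-M7 are invariant under isometric algebra automorphisms, hence arho, the
   image of the axis a1, is a Majorana axis. *)

Section LinearMaps.
Variables (R : realType) (V : lmodType R) (t : V -> V).
Hypothesis t_lin : lin_map t.

Lemma lin_map0 : t 0 = 0.
Proof.
have := t_lin 1 0 0; rewrite scaler0 addr0 scale1r => E.
by apply: (addrI (t 0)); rewrite addr0 -E.
Qed.

Lemma lin_mapD u v : t (u + v) = t u + t v.
Proof. by have := t_lin 1 u v; rewrite !scale1r. Qed.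

Lemma lin_mapZ c u : t (c *: u) = c *: t u.
Proof. by have := t_lin c u 0; rewrite !addr0 lin_map0 addr0. Qed.

Lemma lin_mapN u : t (- u) = - t u.
Proof. by rewrite -scaleN1r lin_mapZ scaleN1r. Qed.

End LinearMaps.

Section Eigenspaces.
Variables (R : realType) (V : lmodType R) (form : V -> V -> R) (mul : V -> V -> V).
Hypothesis form_ax : form_axioms form.
Hypothesis mul_ax : product_axioms mul.
Hypothesis mul_form_assoc : M1 form mul.

Lemma mul_lin a : lin_map (mul a).
Proof. by move=> c u v; rewrite !(mul_ax.2 a); exact: mul_ax.1. Qed.

Lemma formC u w : form u w = form w u.
Proof. by case: form_ax. Qed.

Lemma formDl u v w : form (u + v) w = form u w + form v w.
Proof. by case: form_ax => lin _ _; have := lin 1 u v w; rewrite scale1r mul1r. Qed.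

Lemma formZl c u w : form (c *: u) w = c * form u w.
Proof.
case: form_ax => lin _ _; have form0l : form 0 w = 0.
  have := lin 1 0 0 w; rewrite scaler0 addr0 mul1r => E.
  by apply: (addrI (form 0 w)); rewrite addr0 -E.
by have := lin c u 0 w; rewrite !addr0 form0l addr0.
Qed.

Lemma formNl u w : form (- u) w = - form u w.
Proof. by rewrite -scaleN1r formZl mulN1r. Qed.

Lemma formDr u v w : form w (u + v) = form w u + form w v.
Proof. by rewrite formC formDl !(formC w). Qed.

Lemma formNr u w : form w (- u) = - form w u.
Proof. by rewrite formC formNl formC. Qed.

Lemma eigsp_lin a mu c u v :
  eigsp mul a mu u -> eigsp mul a mu v -> eigsp mul a mu (c *: u + v).
Proof. by move=> Hu Hv; rewrite /eigsp mul_lin Hu Hv scalerDr !scalerA mulrC. Qed.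

Lemma eigsp0 a mu : eigsp mul a mu 0.
Proof. by rewrite /eigsp (lin_map0 (mul_lin a)) scaler0. Qed.

Lemma eigspD a mu u v : eigsp mul a mu u -> eigsp mul a mu v -> eigsp mul a mu (u + v).
Proof. by rewrite -{2}[u]scale1r; exact: eigsp_lin. Qed.

Lemma eigspN a mu u : eigsp mul a mu u -> eigsp mul a mu (- u).
Proof. by move=> Hu; rewrite -scaleN1r -[_ *: u]addr0; apply: eigsp_lin Hu (eigsp0 _ _). Qed.

Lemma eigspB a mu u v : eigsp mul a mu u -> eigsp mul a mu v -> eigsp mul a mu (u - v).
Proof. by move=> Hu /eigspN; exact: eigspD. Qed.

Lemma eigsp_orth a l m x y :
  l != m -> eigsp mul a l x -> eigsp mul a m y -> form x y = 0.
Proof.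
move=> neq_lm Hx Hy; have : l * form x y = m * form x y.
  by rewrite -formZl -Hx mul_ax.2 -mul_form_assoc Hy formC formZl formC.
by move/eqP; rewrite -subr_eq0 -mulrBl mulf_eq0 subr_eq0 (negbTE neq_lm) => /eqP.
Qed.

End Eigenspaces.

Section Transport.
Variables (R : realType) (V : lmodType R) (form : V -> V -> R) (mul : V -> V -> V).
Variables (phi psi : V -> V).
Hypothesis phi_lin : lin_map phi.
Hypothesis phiK : cancel phi psi.
Hypothesis psiK : cancel psi phi.
Hypothesis phi_mul : forall u v, phi (mul u v) = mul (phi u) (phi v).
Hypothesis phi_form : forall u v, form (phi u) (phi v) = form u v.

Lemma psi_lin : lin_map psi.
Proof. by move=> c u v; apply: (can_inj phiK); rewrite phi_lin !psiK. Qed.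

Lemma psi_mul u v : psi (mul u v) = mul (psi u) (psi v).
Proof. by apply: (can_inj phiK); rewrite phi_mul !psiK. Qed.

Lemma eigsp_transport a mu v : eigsp mul (phi a) mu v <-> eigsp mul a mu (psi v).
Proof.
rewrite /eigsp; split=> E.
  by rewrite -{1}(phiK a) -psi_mul E (lin_mapZ psi_lin).
by apply: (can_inj psiK); rewrite psi_mul phiK E (lin_mapZ psi_lin).
Qed.

Lemma eigsp_phi a mu v : eigsp mul a mu v -> eigsp mul (phi a) mu (phi v).
Proof. by move=> E; apply/eigsp_transport; rewrite phiK. Qed.

Lemma lin_map_conj t : lin_map t -> lin_map (fun v => psi (t (phi v))).
Proof. by move=> t_lin c u v; rewrite phi_lin t_lin psi_lin. Qed.

Lemma Vplus_transport a w : Vplus mul (phi a) w -> Vplus mul a (psi w).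
Proof.
case=> [w1 [w0 [w4 [E1 E0 E4 ->]]]].
exists (psi w1), (psi w0), (psi w4); split; try exact/eigsp_transport.
by rewrite !(lin_mapD psi_lin).
Qed.

Lemma M3_transport a : M3 form mul a -> M3 form mul (phi a).
Proof. by case=> aa_form aa_mul; split; rewrite ?phi_form // -phi_mul aa_mul. Qed.

Lemma M4_transport a : M4 mul a -> M4 mul (phi a).
Proof.
case=> [a_dec a_uniq]; split.
  move=> v; have [w1 [w0 [w4 [w32 [E1 E0 E4 E32 Ev]]]]] := a_dec (psi v).
  exists (phi w1), (phi w0), (phi w4), (phi w32); split; try exact: eigsp_phi.
  by rewrite -!(lin_mapD phi_lin) -Ev psiK.
move=> v1 v0 v4 v32 /eigsp_transport E1 /eigsp_transport E0 /eigsp_transport E4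
  /eigsp_transport E32 sum0.
have := a_uniq _ _ _ _ E1 E0 E4 E32.
rewrite -!(lin_mapD psi_lin) sum0 (lin_map0 psi_lin) => /(_ erefl) [Z1 Z0 Z4 Z32].
by split; rewrite -[LHS]psiK ?Z1 ?Z0 ?Z4 ?Z32 (lin_map0 phi_lin).
Qed.

Lemma M5_transport a : M5 mul a -> M5 mul (phi a).
Proof.
move=> a_M5 v; rewrite eigsp_transport a_M5; split=> -[c Hc]; exists c.
  by rewrite -[v]psiK Hc (lin_mapZ phi_lin).
by rewrite Hc (lin_mapZ psi_lin) phiK.
Qed.

Lemma M6_transport a : M6 mul a -> M6 mul (phi a).
Proof.
move=> a_M6 t [t_lin t_fix t_neg] u v.
have t'_tau : is_tau mul a (fun v => psi (t (phi v))).
  split; first exact: lin_map_conj.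
    move=> x Hx; rewrite t_fix ?phiK //.
    by case: Hx => [E|[E|E]]; [left|right; left|right; right]; exact: eigsp_phi.
  by move=> x /eigsp_phi /t_neg ->; rewrite (lin_mapN psi_lin) phiK.
have /= := a_M6 _ t'_tau (psi u) (psi v).
by rewrite -psi_mul !psiK => E; apply: (can_inj psiK); rewrite E psi_mul.
Qed.

Lemma M7_transport a : M7 mul a -> M7 mul (phi a).
Proof.
move=> a_M7 s [s_lin s_fix s_neg] u v /Vplus_transport Hu /Vplus_transport Hv.
have s'_sigma : is_sigma mul a (fun v => psi (s (phi v))).
  split; first exact: lin_map_conj.
    move=> x Hx; rewrite s_fix ?phiK //.
    by case: Hx => [E|E]; [left|right]; exact: eigsp_phi.
  by move=> x /eigsp_phi /s_neg ->; rewrite (lin_mapN psi_lin) phiK.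
have /= := a_M7 _ s'_sigma _ _ Hu Hv.
by rewrite -psi_mul !psiK => E; apply: (can_inj psiK); rewrite E psi_mul.
Qed.

Lemma majorana_axis_transport a :
  majorana_axis form mul a -> majorana_axis form mul (phi a).
Proof.
case=> a_M3 a_M4 a_M5 a_M6 a_M7; split.
- exact: M3_transport.
- exact: M4_transport.
- exact: M5_transport.
- exact: M6_transport.
- exact: M7_transport.
Qed.

End Transport.

Section SigmaOnWholeSpace.
Variables (R : realType) (V : lmodType R) (form : V -> V -> R) (mul : V -> V -> V).
Variable a : V.
Hypothesis form_ax : form_axioms form.
Hypothesis mul_ax : product_axioms mul.
Hypothesis mul_form_assoc : M1 form mul.
Hypothesis a_M4 : M4 mul a.
Hypothesis a_no32 : forall v, eigsp mul a (1/32) v -> v = 0.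
Hypothesis a_M7 : M7 mul a.

Lemma eigsp_decomp3 v : exists x1 x0 x4,
  [/\ eigsp mul a 1 x1, eigsp mul a 0 x0, eigsp mul a (1/4) x4 & v = x1 + x0 + x4].
Proof.
have [x1 [x0 [x4 [x32 [E1 E0 E4 E32 ->]]]]] := a_M4.1 v.
by exists x1, x0, x4; rewrite (a_no32 E32) addr0.
Qed.

Lemma quarter_part_unique x1 x0 x4 y1 y0 y4 :
  eigsp mul a 1 x1 -> eigsp mul a 0 x0 -> eigsp mul a (1/4) x4 ->
  eigsp mul a 1 y1 -> eigsp mul a 0 y0 -> eigsp mul a (1/4) y4 ->
  x1 + x0 + x4 = y1 + y0 + y4 -> x4 = y4.
Proof.
move=> E1 E0 E4 F1 F0 F4 eq_sum.
have := a_M4.2 _ _ _ _ (eigspB mul_ax E1 F1) (eigspB mul_ax E0 F0)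
  (eigspB mul_ax E4 F4) (eigsp0 mul_ax a (1/32)).
rewrite addr0 (addrACA x1) (addrACA (x1 + x0)) -!opprD eq_sum subrr.
move=> /(_ erefl) [_ _ /eqP].
by rewrite subr_eq0 => /eqP.
Qed.

Definition sigma_graph v w := exists x1 x0 x4,
  [/\ eigsp mul a 1 x1, eigsp mul a 0 x0, eigsp mul a (1/4) x4,
      v = x1 + x0 + x4 & w = x1 + x0 - x4].

Lemma sigma_graph_total v : exists w, sigma_graph v w.
Proof.
have [x1 [x0 [x4 [E1 E0 E4 Ev]]]] := eigsp_decomp3 v.
by exists (x1 + x0 - x4), x1, x0, x4.
Qed.

Lemma sigma_graph_unique v w w' : sigma_graph v w -> sigma_graph v w' -> w = w'.
Proof.
move=> [x1 [x0 [x4 [E1 E0 E4 Ev ->]]]] [y1 [y0 [y4 [F1 F0 F4 Fv ->]]]].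
have eq4 := quarter_part_unique E1 E0 E4 F1 F0 F4 (etrans (esym Ev) Fv).
by rewrite -(addrK x4 (x1 + x0)) -Ev Fv -eq4 addrK.
Qed.

Lemma sigma_graph_lin c u v w w' :
  sigma_graph u w -> sigma_graph v w' -> sigma_graph (c *: u + v) (c *: w + w').
Proof.
move=> [x1 [x0 [x4 [E1 E0 E4 -> ->]]]] [y1 [y0 [y4 [F1 F0 F4 -> ->]]]].
exists (c *: x1 + y1), (c *: x0 + y0), (c *: x4 + y4).
split; try exact: eigsp_lin.
  by rewrite !scalerDr (addrACA (c *: x1 + c *: x0)) (addrACA (c *: x1)).
by rewrite !scalerDr scalerN opprD (addrACA (c *: x1 + c *: x0)) (addrACA (c *: x1)).
Qed.

Lemma sigma_exists : exists s, is_sigma mul a s.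
Proof.
have [s sP] := @functional_choice _ _ _ sigma_graph_total.
have s_graph v w : sigma_graph v w -> s v = w by exact: sigma_graph_unique.
exists s; split.
- by move=> c u v; apply/s_graph/sigma_graph_lin.
- move=> v [E|E]; apply: s_graph.
    by exists v, 0, 0; rewrite ?subr0 ?addr0; split; rewrite //; exact: eigsp0.
  by exists 0, v, 0; rewrite ?subr0 ?addr0 ?add0r; split; rewrite //; exact: eigsp0.
- move=> v E; apply: s_graph.
  by exists 0, 0, v; rewrite !add0r; split; rewrite //; exact: eigsp0.
Qed.

Section SigmaAutomorphism.
Variable s : V -> V.
Hypothesis s_sigma : is_sigma mul a s.

Lemma sigma_decomp x1 x0 x4 :
  eigsp mul a 1 x1 -> eigsp mul a 0 x0 -> eigsp mul a (1/4) x4 ->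
  s (x1 + x0 + x4) = x1 + x0 - x4.
Proof.
case: s_sigma => s_lin s_fix s_neg E1 E0 E4.
rewrite !(lin_mapD s_lin) (s_neg _ E4).
by rewrite (s_fix x1 (or_introl E1)) (s_fix x0 (or_intror E0)).
Qed.

Lemma sigmaK : involutive s.
Proof.
move=> v; have [x1 [x0 [x4 [E1 E0 E4 ->]]]] := eigsp_decomp3 v.
by rewrite sigma_decomp // sigma_decomp ?opprK //; exact: eigspN.
Qed.

Lemma Vplus_all v : Vplus mul a v.
Proof. by have [x1 [x0 [x4 [E1 E0 E4 ->]]]] := eigsp_decomp3 v; exists x1, x0, x4. Qed.

Lemma sigma_mul u v : s (mul u v) = mul (s u) (s v).
Proof. exact: a_M7 s_sigma _ _ (Vplus_all u) (Vplus_all v). Qed.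

Lemma sigma_form u v : form (s u) (s v) = form u v.
Proof.
have [x1 [x0 [x4 [E1 E0 E4 ->]]]] := eigsp_decomp3 u.
have [y1 [y0 [y4 [F1 F0 F4 ->]]]] := eigsp_decomp3 v.
have neq14 : (1 : R) != 1/4 by apply/eqP; lra.
have neq04 : (0 : R) != 1/4 by apply/eqP; lra.
have o1 := eigsp_orth form_ax mul_ax mul_form_assoc neq14 E1 F4.
have o2 := eigsp_orth form_ax mul_ax mul_form_assoc neq04 E0 F4.
have o3 := eigsp_orth form_ax mul_ax mul_form_assoc neq14 F1 E4.
have o4 := eigsp_orth form_ax mul_ax mul_form_assoc neq04 F0 E4.
rewrite (formC form_ax y1) (formC form_ax y0) in o3 o4.
rewrite !sigma_decomp //.
rewrite !(formDl form_ax, formDr form_ax, formNl form_ax, formNr form_ax) o1 o2 o3 o4.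
ring.
Qed.

End SigmaAutomorphism.
End SigmaOnWholeSpace.

Section TwoA.
Variables (R : realType) (V : lmodType R) (mul : V -> V -> V) (a0 a1 arho : V).
Hypothesis mul_ax : product_axioms mul.
Hypothesis a0a0 : mul a0 a0 = a0.
Hypothesis a0a1 : mul a0 a1 = (1/8) *: (a0 + a1 - arho).
Hypothesis a0arho : mul a0 arho = (1/8) *: (a0 + arho - a1).

Definition lcomb (c0 c1 c2 : R) := c0 *: a0 + c1 *: a1 + c2 *: arho.

Lemma lcombD c0 c1 c2 d0 d1 d2 :
  lcomb c0 c1 c2 + lcomb d0 d1 d2 = lcomb (c0 + d0) (c1 + d1) (c2 + d2).
Proof. by rewrite /lcomb !scalerDl addrACA (addrACA (c0 *: a0)). Qed.

Lemma lcombZ k c0 c1 c2 : k *: lcomb c0 c1 c2 = lcomb (k * c0) (k * c1) (k * c2).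
Proof. by rewrite /lcomb !scalerDr !scalerA. Qed.

Lemma lcombB c0 c1 c2 d0 d1 d2 :
  lcomb c0 c1 c2 - lcomb d0 d1 d2 = lcomb (c0 - d0) (c1 - d1) (c2 - d2).
Proof. by rewrite -scaleN1r lcombZ lcombD !mulN1r. Qed.

Lemma lcomb_a0 : a0 = lcomb 1 0 0.
Proof. by rewrite /lcomb scale1r !scale0r !addr0. Qed.

Lemma lcomb_a1 : a1 = lcomb 0 1 0.
Proof. by rewrite /lcomb scale1r !scale0r add0r addr0. Qed.

Lemma lcomb_arho : arho = lcomb 0 0 1.
Proof. by rewrite /lcomb scale1r !scale0r !add0r. Qed.

Lemma mul_a0_lcomb c0 c1 c2 :
  mul a0 (lcomb c0 c1 c2) = lcomb (c0 + (c1 + c2) / 8) ((c1 - c2) / 8) ((c2 - c1) / 8).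
Proof.
rewrite [in LHS]/lcomb !(lin_mapD (mul_lin mul_ax a0)) !(lin_mapZ (mul_lin mul_ax a0)).
rewrite a0a0 a0a1 a0arho [in LHS]lcomb_a0 [in LHS]lcomb_a1 [in LHS]lcomb_arho.
by rewrite !(lcombD, lcombB, lcombZ); congr lcomb; field.
Qed.

Lemma eigsp_lcomb mu c0 c1 c2 :
  c0 + (c1 + c2) / 8 = mu * c0 -> (c1 - c2) / 8 = mu * c1 -> (c2 - c1) / 8 = mu * c2 ->
  eigsp mul a0 mu (lcomb c0 c1 c2).
Proof. by move=> e0 e1 e2; rewrite /eigsp mul_a0_lcomb lcombZ e0 e1 e2. Qed.

Lemma sigma_a1 s : is_sigma mul a0 s -> s a1 = arho.
Proof.
move=> s_sigma.
have X1 : eigsp mul a0 1 (lcomb (1/8) 0 0) by apply: eigsp_lcomb; field.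
have X0 : eigsp mul a0 0 (lcomb (-1/8) (1/2) (1/2)) by apply: eigsp_lcomb; field.
have X4 : eigsp mul a0 (1/4) (lcomb 0 (1/2) (-1/2)) by apply: eigsp_lcomb; field.
have -> : a1 = lcomb (1/8) 0 0 + lcomb (-1/8) (1/2) (1/2) + lcomb 0 (1/2) (-1/2).
  by rewrite lcomb_a1 !lcombD; congr lcomb; field.
by rewrite (sigma_decomp s_sigma X1 X0 X4) lcombD lcombB lcomb_arho; congr lcomb; field.
Qed.

End TwoA.

Lemma tau_id_eigsp_32 (R : realType) (V : lmodType R) (mul : V -> V -> V) a :
  is_tau mul a idfun -> forall v, eigsp mul a (1/32) v -> v = 0.
Proof.
case=> _ _ t_neg v /t_neg /= /eqP; rewrite -subr_eq0 opprK -mulr2n -scaler_nat scaler_eq0.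
by rewrite pnatr_eq0 /= => /eqP.
Qed.

Theorem mainTheorem2 (R : realType) (V : lmodType R)
    (form : V -> V -> R) (mul : V -> V -> V) (A : V -> Prop)
    (a0 a1 arho : V) :
  majorana_algebra form mul A ->
  A a0 -> A a1 ->
  is_tau mul a0 idfun ->
  type2A form mul a0 a1 arho ->
  majorana_axis form mul arho.
Proof.
case=> form_ax mul_ax [assoc _] axes _ A_a0 A_a1 tau_id [_ _ [_ a0a1 a0arho _] _].
have [[_ a0a0] a0_M4 _ _ a0_M7] := axes a0 A_a0.
have a0_no32 := tau_id_eigsp_32 tau_id.
have [s s_sigma] := sigma_exists mul_ax a0_M4 a0_no32.
rewrite -(sigma_a1 mul_ax a0a0 a0a1 a0arho s_sigma).
have s_inv := sigmaK mul_ax a0_M4 a0_no32 s_sigma.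
apply: (majorana_axis_transport _ s_inv s_inv) (axes a1 A_a1).
- by case: s_sigma.
- exact: (sigma_mul a0_M4 a0_no32 a0_M7 s_sigma).
- exact: (sigma_form form_ax mul_ax assoc a0_M4 a0_no32 s_sigma).
Qed.
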